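(* For any fitness graph $\mathcal{G}=(G,(m,r))$ and any seed sets $S\subseteq S'\subseteq V$, we have $\operatorname{fp}_{\mathcal{G}}(S)\le\operatorname{fp}_{\mathcal{G}}(S')$.
   Context: A fitness graph is $\mathcal{G}=(G,(m,r))$ where $G=(V,E,w)$ is a strongly connected directed graph, $w(u,\cdot)$ is a probability distribution over out-neighbours of $u$, and $r,m\colon V\to(0,\infty)$ are resident and mutant fitness functions. For a configuration (set of mutants) $X\subseteq V$, $f_X(u)=m(u)$ if $u\in X$, else $r(u)$. The Heterogeneous Moran process starts at $\mathcal{X}_0=S$; from $\mathcal{X}_t=X$ it picks $u$ with probability $f_X(u)/\sum_v f_X(v)$, then $v$ with probability $w(u,v)$, and $v$ takes the type of $u$. $\operatorname{fp}_{\mathcal{G}}(S)$ is the probability that the process eventually reaches $V$. *)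

From HB Require Import structures.
From mathcomp Require Import all_boot all_order all_algebra.
From mathcomp Require Import all_classical all_reals all_analysis.
Set Implicit Arguments. Unset Strict Implicit. Unset Printing Implicit Defensive.
Import Order.TTheory GRing.Theory Num.Theory.
Import numFieldNormedType.Exports.
Local Open Scope ring_scope.

Section Moran.
Variables (R : realType) (V : finType).

(* A fitness graph: directed graph E on V, weights w, fitnesses m (mutant), r (resident). *)
Definition fitness_graph (E : rel V) (w : V -> V -> R) (m r : V -> R) : Prop :=
  (forall u v, connect E u v)
  /\ (forall u v, 0 <= w u v)
  /\ (forall u, \sum_(v : V) w u v = 1)
  /\ (forall u v, w u v != 0 -> E u v)
  /\ (forall u, 0 < m u) /\ (forall u, 0 < r u).

(* fitness of u in configuration X (set of mutants) *)
Definition fit (m r : V -> R) (X : {set V}) (u : V) : R :=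
  if u \in X then m u else r u.

Definition moran_next (X : {set V}) (u v : V) : {set V} :=
  if u \in X then v |: X else X :\ v.

Definition moran_trans (w : V -> V -> R) (m r : V -> R) (X Y : {set V}) : R :=
  \sum_(u : V) \sum_(v : V)
     (fit m r X u / \sum_(x : V) fit m r X x) * w u v * (moran_next X u v == Y)%:R.

Fixpoint moran_dist (w : V -> V -> R) (m r : V -> R) (S : {set V}) (t : nat)
  : {set V} -> R :=
  match t with
  | 0 => fun Y => (Y == S)%:R
  | t'.+1 => fun Y => \sum_(X : {set V}) moran_dist w m r S t' X * moran_trans w m r X Y
  end.

(* fixation probability: probability of eventually reaching V.  Since V is
   absorbing, {reach V} is the increasing union of the events {X_t = V}, so its
   probability is the limit of P(X_t = V). *)
Definition fp (w : V -> V -> R) (m r : V -> R) (S : {set V}) : R :=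
  limn (fun t => moran_dist w m r S t [set: V]).

End Moran.

From HB Require Import structures.
From mathcomp Require Import all_boot all_order all_algebra.
From mathcomp Require Import all_classical all_reals all_analysis.
From mathcomp Require Import ring.
Import Order.TTheory GRing.Theory Num.Theory.
Import numFieldNormedType.Exports.
Local Open Scope ring_scope.

(* Write P = next_mean for the one-step mean, P g X = E[g X_1 | X_0 = X].
   pfix t X = Pr[X_t = V] increases to fp, and fp is P-harmonic.  P does not
   preserve monotonicity in the configuration, but its lazy version
   Q = lazy_next_mean = I + (total_fit X / fit_bound) (P - I) does: driving
   X \subset Y by the same u and v, and pairing the idle event of one with
   the reproduction of the other when u \in Y :\: X, keeps them ordered.
   Let G = fp_minorant, G X = min of fp over the supersets of X, the largest
   monotone minorant of fp.  For a minimising superset Y of X,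
   Q G X <= Q G Y <= Q fp Y = fp Y = G X, hence P G <= G.  By induction
   pfix t <= G for all t, so fp <= G <= fp and fp is monotone. *)

Lemma psumr_gt0 {R : numDomainType} {I : finType} (i0 : I) (F : I -> R) :
  (forall i, 0 < F i) -> 0 < \sum_i F i.
Proof.
move=> F_gt0; rewrite (bigD1 i0) //= ltr_pwDl //.
by apply: sumr_ge0 => i _; exact/ltW.
Qed.

Lemma fit_gt0 (R : realType) (V : finType) (a b : V -> R) X u :
  (forall u, 0 < a u) -> (forall u, 0 < b u) -> 0 < fit a b X u.
Proof. by move=> a_gt0 b_gt0; rewrite /fit; case: ifP. Qed.

Lemma fit_add_swap (R : realType) (V : finType) (a b : V -> R) X u :
  fit a b X u + fit b a X u = a u + b u.
Proof. by rewrite /fit; case: ifP => _ //; rewrite addrC. Qed.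

Section MoranMonotone.
Variables (R : realType) (V : finType) (w : V -> V -> R) (m r : V -> R).
Hypotheses (w_ge0 : forall u v, 0 <= w u v) (w_sum1 : forall u, \sum_v w u v = 1).
Hypotheses (m_gt0 : forall u, 0 < m u) (r_gt0 : forall u, 0 < r u).
Variable v0 : V.

Let fitmr_gt0 X u : 0 < fit m r X u. Proof. exact: fit_gt0. Qed.
Let fitrm_gt0 X u : 0 < fit r m X u. Proof. exact: fit_gt0. Qed.

Definition total_fit X := \sum_x fit m r X x.

Lemma total_fit_gt0 X : 0 < total_fit X.
Proof. by apply: (psumr_gt0 v0 (fit m r X)). Qed.

Definition next_mean (g : {set V} -> R) X :=
  \sum_u \sum_v fit m r X u / total_fit X * w u v * g (moran_next X u v).

Lemma next_mean_trans g X :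
  \sum_Y moran_trans w m r X Y * g Y = next_mean g X.
Proof.
rewrite /moran_trans -/(total_fit X) /next_mean.
under eq_bigr => Y _ do rewrite mulr_suml.
under eq_bigr => Y _ do under eq_bigr => u _ do rewrite mulr_suml.
rewrite exchange_big; apply: eq_bigr => u _; rewrite exchange_big.
apply: eq_bigr => v _.
rewrite (bigD1 (moran_next X u v)) //= eqxx mulr1 [X in _ + X]big1 ?addr0 //.
by move=> Y /negbTE; rewrite eq_sym => ->; rewrite mulr0 mul0r.
Qed.

Lemma moran_distS X t Z : moran_dist w m r X t.+1 Z =
  \sum_Y moran_dist w m r X t Y * moran_trans w m r Y Z.
Proof. by []. Qed.

Lemma moran_distSl X t Z : moran_dist w m r X t.+1 Z =
  \sum_Y moran_trans w m r X Y * moran_dist w m r Y t Z.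
Proof.
elim: t Z => [|t IH] Z.
  rewrite /= (bigD1 X) //= eqxx mul1r [X in _ + X]big1 ?addr0; last first.
    by move=> Y /negbTE ->; rewrite mul0r.
  rewrite (bigD1 Z) //= eqxx mulr1 [X in _ + X]big1 ?addr0 //.
  by move=> Y /negbTE; rewrite eq_sym => ->; rewrite mulr0.
rewrite moran_distS.
under eq_bigr => W _ do rewrite IH mulr_suml.
rewrite exchange_big; apply: eq_bigr => Y _.
by rewrite moran_distS mulr_sumr; apply: eq_bigr => W _; rewrite mulrA.
Qed.

Definition pfix t X := moran_dist w m r X t [set: V].

Lemma pfixS t X : pfix t.+1 X = next_mean (pfix t) X.
Proof. by rewrite /pfix moran_distSl next_mean_trans. Qed.

Lemma ler_next_mean g1 g2 X :
  (forall Y, g1 Y <= g2 Y) -> next_mean g1 X <= next_mean g2 X.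
Proof.
move=> g12; apply: ler_sum => u _; apply: ler_sum => v _; apply: ler_wpM2l => //.
by rewrite mulr_ge0 // divr_ge0 // ltW // total_fit_gt0.
Qed.

Lemma next_mean_cst c X : next_mean (fun=> c) X = c.
Proof.
rewrite /next_mean.
under eq_bigr => u _ do rewrite -mulr_suml -mulr_sumr w_sum1 mulr1.
by rewrite -!mulr_suml -/(total_fit X) mulfV ?mul1r // gt_eqF ?total_fit_gt0.
Qed.

Lemma next_mean_setT g : next_mean g [set: V] = g [set: V].
Proof.
rewrite -[RHS](next_mean_cst _ [set: V]).
apply: eq_bigr => u _; apply: eq_bigr => v _.
by rewrite /moran_next finset.in_setT finset.setUT.
Qed.

Lemma pfix_setT t : pfix t [set: V] = 1.
Proof. by elim: t => [|t IH]; rewrite ?pfixS ?next_mean_setT // /pfix /= eqxx. Qed.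

Lemma pfix_ge0 t X : 0 <= pfix t X.
Proof.
elim: t X => [|t IH] X; first exact: ler0n.
by rewrite pfixS -(next_mean_cst 0 X); exact: ler_next_mean.
Qed.

Lemma pfix_le1 t X : pfix t X <= 1.
Proof.
elim: t X => [|t IH] X; first by rewrite /pfix /=; case: eqP.
by rewrite pfixS -(next_mean_cst 1 X); exact: ler_next_mean.
Qed.

Lemma nondecreasing_pfix X : nondecreasing_seq (pfix^~ X).
Proof.
apply/nondecreasing_seqP => t; elim: t X => [|t IH] X.
  rewrite {1}/pfix /=; case: eqVneq => [<-|_]; first by rewrite pfix_setT.
  exact: pfix_ge0.
by rewrite (pfixS t) (pfixS t.+1); exact: ler_next_mean.
Qed.

Lemma cvg_pfix X : cvgn (pfix^~ X).
Proof.
apply: nondecreasing_is_cvgn; first exact: nondecreasing_pfix.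
by exists 1 => _ [t _ <-]; exact: pfix_le1.
Qed.

Lemma pfix_le_fp t X : pfix t X <= fp w m r X.
Proof. exact: (nondecreasing_cvgn_le (nondecreasing_pfix X) (cvg_pfix X)). Qed.

Lemma fp_ge0 X : 0 <= fp w m r X.
Proof. exact: le_trans (pfix_ge0 0 X) (pfix_le_fp 0 X). Qed.

Lemma fp_setT : fp w m r [set: V] = 1.
Proof. by rewrite /fp (eq_fun pfix_setT) lim_cst. Qed.

Lemma next_mean_fp X : next_mean (fp w m r) X = fp w m r X.
Proof.
have cvg_next :
    (next_mean (pfix t) X @[t --> \oo] --> next_mean (fp w m r) X)%classic.
  apply: cvg_big => // [|u _]; first exact: add_continuous.
  apply: cvg_big => // [|v _]; first exact: add_continuous.
  by apply: cvgM; [exact: cvg_cst | exact: cvg_pfix].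
apply: (norm_cvg_unique cvg_next) => /=.
under eq_cvg do rewrite -pfixS.
by have := cvg_pfix X; rewrite -(cvg_shiftS (pfix^~ X)).
Qed.

Definition fit_bound := \sum_x (m x + r x).

Lemma fit_bound_gt0 : 0 < fit_bound.
Proof. by apply: (psumr_gt0 v0) => x; rewrite addr_gt0. Qed.

(* Each [u] is picked with probability [(m u + r u) / fit_bound] and then
   reproduces onto [v] with probability [w u v * fit m r X u / (m u + r u)];
   otherwise nothing happens. *)
Definition lazy_next_mean (g : {set V} -> R) X :=
  \sum_u \sum_v w u v * (fit r m X u / fit_bound * g X
                         + fit m r X u / fit_bound * g (moran_next X u v)).

Lemma lazy_next_meanE g X :
  lazy_next_mean g X = g X + total_fit X / fit_bound * (next_mean g X - g X).
Proof.
have idle_rate : \sum_u fit r m X u = fit_bound - total_fit X.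
  apply/eqP; rewrite eq_sym subr_eq -big_split /=; apply/eqP.
  by apply: eq_bigr => u _; rewrite addrC fit_add_swap.
have move_part : \sum_u \sum_v w u v * (fit m r X u / fit_bound * g (moran_next X u v))
    = total_fit X / fit_bound * next_mean g X.
  rewrite /next_mean mulr_sumr; apply: eq_bigr => u _; rewrite mulr_sumr.
  apply: eq_bigr => v _; field.
  by rewrite !gt_eqF ?fit_bound_gt0 ?total_fit_gt0.
rewrite /lazy_next_mean.
under eq_bigr => u _ do
  rewrite (eq_bigr _ (fun v _ => mulrDr _ _ _)) big_split /= -mulr_suml w_sum1 mul1r.
rewrite big_split /= move_part -!mulr_suml idle_rate.
by field; rewrite gt_eqF ?fit_bound_gt0.
Qed.

Lemma ler_lazy_next_mean g1 g2 X :
  (forall Y, g1 Y <= g2 Y) -> lazy_next_mean g1 X <= lazy_next_mean g2 X.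
Proof.
move=> g12; apply: ler_sum => u _; apply: ler_sum => v _; apply: ler_wpM2l => //.
by apply: lerD; apply: ler_wpM2l => //; rewrite divr_ge0 ?ltW ?fit_bound_gt0.
Qed.

Lemma lazy_next_mean_mono (g : {set V} -> R) (X Y : {set V}) :
  {homo g : A B / A \subset B >-> A <= B} ->
  X \subset Y -> lazy_next_mean g X <= lazy_next_mean g Y.
Proof.
move=> g_mono XY; apply: ler_sum => u _; apply: ler_sum => v _; apply: ler_wpM2l => //.
have m_ge0 : 0 <= m u / fit_bound by rewrite divr_ge0 ?ltW ?fit_bound_gt0.
have r_ge0 : 0 <= r u / fit_bound by rewrite divr_ge0 ?ltW ?fit_bound_gt0.
rewrite /fit /moran_next.
case uX: (u \in X); case uY: (u \in Y).
- by apply: lerD; apply: ler_wpM2l => //; apply: g_mono => //; exact: finset.setUS.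
- by move/fintype.subsetP: XY => /(_ u uX); rewrite uY.
- rewrite addrC; apply: lerD; apply: ler_wpM2l => //; apply: g_mono.
    exact: fintype.subset_trans (finset.subsetDl _ _) XY.
  exact: fintype.subset_trans XY (finset.subsetUr _ _).
- by apply: lerD; apply: ler_wpM2l => //; apply: g_mono => //; exact: finset.setSD.
Qed.

Definition fp_minorant (X : {set V}) :=
  fp w m r [arg min_(Y < [set: V] | X \subset Y) fp w m r Y]%O.

Lemma fp_minorant_spec (X : {set V}) : exists2 Y : {set V}, X \subset Y &
  fp_minorant X = fp w m r Y /\ forall Z : {set V}, X \subset Z -> fp w m r Y <= fp w m r Z.
Proof. by rewrite /fp_minorant; case: arg_minP => [|Y XY Y_min]; [exact: finset.subsetT|exists Y]. Qed.

Lemma fp_minorant_le_fp X : fp_minorant X <= fp w m r X.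
Proof. by have [Y _ [-> Y_min]] := fp_minorant_spec X; exact: Y_min. Qed.

Lemma fp_minorant_mono : {homo fp_minorant : X Y / X \subset Y >-> X <= Y}.
Proof.
move=> X X' XX'; have [Y' X'Y' [-> _]] := fp_minorant_spec X'.
have [Y _ [-> Y_min]] := fp_minorant_spec X.
exact/Y_min/(fintype.subset_trans XX').
Qed.

Lemma fp_minorant_setT : fp_minorant [set: V] = 1.
Proof.
have [Y TY [-> _]] := fp_minorant_spec [set: V].
by move: TY; rewrite finset.subTset => /eqP ->; exact: fp_setT.
Qed.

Lemma fp_minorant_ge0 X : 0 <= fp_minorant X.
Proof. by have [Y _ [-> _]] := fp_minorant_spec X; exact: fp_ge0. Qed.

Lemma next_mean_fp_minorant X : next_mean fp_minorant X <= fp_minorant X.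
Proof.
have lazy_super : lazy_next_mean fp_minorant X <= fp_minorant X.
  have [Y XY [-> _]] := fp_minorant_spec X.
  apply: le_trans (lazy_next_mean_mono _ _ _ fp_minorant_mono XY) _.
  apply: le_trans (ler_lazy_next_mean _ _ Y fp_minorant_le_fp) _.
  by rewrite lazy_next_meanE next_mean_fp subrr mulr0 addr0.
move: lazy_super; rewrite lazy_next_meanE gerDl pmulr_rle0 ?subr_le0 //.
by rewrite divr_gt0 ?total_fit_gt0 ?fit_bound_gt0.
Qed.

Lemma pfix_le_fp_minorant t X : pfix t X <= fp_minorant X.
Proof.
elim: t X => [|t IH] X.
  rewrite /pfix /=; case: eqVneq => [<-|_]; first by rewrite fp_minorant_setT.
  exact: fp_minorant_ge0.
by rewrite pfixS; apply: le_trans (next_mean_fp_minorant X); exact: ler_next_mean.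
Qed.

Lemma fp_mono : {homo fp w m r : X Y / X \subset Y >-> X <= Y}.
Proof.
move=> X Y XY; apply: le_trans (fp_minorant_le_fp Y).
apply: le_trans (fp_minorant_mono _ _ XY).
apply: limr_le; [exact: cvg_pfix | apply: nearW => t].
exact: pfix_le_fp_minorant t X.
Qed.

End MoranMonotone.

Theorem corollary2 (R : realType) (V : finType) (E : rel V) (w : V -> V -> R)
    (m r : V -> R) (S S' : {set V}) :
  fitness_graph E w m r -> S \subset S' -> fp w m r S <= fp w m r S'.
Proof.
move=> [_ [w_ge0 [w_sum1 [_ [m_gt0 r_gt0]]]]] SS'.
have [v0 _|V_empty] := pickP (@predT V); first exact: fp_mono.
suff -> : S = S' by [].
by apply/setP => x; have := V_empty x.
Qed.
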